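(* In the setting below with $P=\mathfrak S$, the worst case setting and the normalized error criterion: $\{S_d\}$ is strongly polynomially tractable if and only if $\lambda\in\ell_\tau$ for some $\tau>0$, $\lambda_1>\lambda_2$, and $d-\#I_d\in O(1)$. Moreover, $\{S_d\}$ is polynomially tractable if and only if $\lambda\in\ell_\tau$ for some $\tau>0$ and $d-\#I_d\in O(\ln d)$.
   Context: Setting: $S_1:H_1\to G_1$ is a compact linear operator between real Hilbert spaces ($H_1$ infinite-dimensional separable); $\lambda=(\lambda_m)_{m\in\mathbb N}$, $\lambda_1\ge\lambda_2\ge\dots\ge0$, are the eigenvalues of $S_1^\dagger S_1$. $S_d=S_1^{\otimes d}:H_1^{\otimes d}\to G_1^{\otimes d}$. For each $d$ fix $\emptyset\ne I_d=\{i_1<\dots<i_{a_d}\}\subset\{1,\dots,d\}$ ($I_1=\{1\}$), put $a_d=\#I_d$, $b_d=d-a_d$, and fix one type $P\in\{\mathfrak S,\mathfrak A\}$ for all $d$; the problem $\{S_d\}$ is the family of restrictions of $S_d$ to the $I_d$-symmetric subspace (if $P=\mathfrak S$) or $I_d$-antisymmetric subspace (if $P=\mathfrak A$) of $H_1^{\otimes d}$, i.e. the range of $\frac1{a_d!}\sum_{\pi}(\pm1)U_\pi$, the sum over permutations $\pi$ of $\{1,\dots,d\}$ fixing all points outside $I_d$, $U_\pi(f_1\otimes\cdots\otimes f_d)=f_{\pi(1)}\otimes\cdots\otimes f_{\pi(d)}$, sign $(-1)^{|\pi|}$ used for $\mathfrak A$. Let $\nabla_d=\{k\in\mathbb N^d:k_{i_1}\le\dots\le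 k_{i_{a_d}}\}$ for $P=\mathfrak S$ and with strict inequalities for $P=\mathfrak A$; $\lambda_{d,k}=\prod_{l=1}^d\lambda_{k_l}$; $\psi:\mathbb N\to\nabla_d$ a bijection with $\lambda_{d,\psi(1)}\ge\lambda_{d,\psi(2)}\ge\cdots$. These are exactly the eigenvalues of $S_d^\dagger S_d$ on the subspace, and the information complexity is $n(\epsilon,d)=\#\{k\in\nabla_d:\lambda_{d,k}>\epsilon^2\}$, the initial error $\epsilon^{\rm init}_d=\sqrt{\lambda_{d,\psi(1)}}$ (equal to $\lambda_1^{d/2}$ if $P=\mathfrak S$, and $\sqrt{\lambda_1^{b_d}\lambda_1\lambda_2\cdots\lambda_{a_d}}$ if $P=\mathfrak A$). Normalized error criterion: polynomially tractable means $\exists C,p>0,q\ge0$ with $n(\epsilon'\epsilon_d^{\rm init},d)\le C(\epsilon')^{-p}d^q$ for all $d\in\mathbb N,\epsilon'\in(0,1]$; strongly polynomially tractable: this with $q=0$. Standing assumptions: $\lambda_2>0$ and $\epsilon_d^{\rm init}>0$ for all $d$. $\ell_\tau$: sequences with $\sum_m\lambda_m^\tau<\infty$. *)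

From Stdlib Require Import Reals Lra Lia List.
Import ListNotations.
Open Scope R_scope.

(* Eigenvalues are a sequence lam : nat -> R, 0-based: lam m = lambda_{m+1}. *)

Definition rpow (x t : R) : R := if Rle_dec x 0 then 0 else Rpower x t.

Definition in_ell (lam : nat -> R) (tau : R) : Prop :=
  exists l : R, infinite_sum (fun m => rpow (lam m) tau) l.

(* I : nat -> nat -> bool ; I d i = true iff position i (1 <= i <= d) is in I_d *)
Definition card_I (I : nat -> nat -> bool) (d : nat) : nat :=
  length (filter (I d) (seq 1 d)).

Definition b_of (I : nat -> nat -> bool) (d : nat) : nat := (d - card_I I d)%nat.

(* k in nabla_d for P = S: k is a multi-index (list of length d, entries are
   0-based eigen-indices, position i of the paper stored at nth (i-1)), with
   k_i <= k_j whenever i < j both in I_d. *)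
Definition nabla_sym (I : nat -> nat -> bool) (d : nat) (k : list nat) : Prop :=
  length k = d /\
  forall i j, (1 <= i)%nat -> (i < j)%nat -> (j <= d)%nat ->
    I d i = true -> I d j = true ->
    (nth (i - 1) k 0 <= nth (j - 1) k 0)%nat.

Definition lam_dk (lam : nat -> R) (k : list nat) : R :=
  fold_right Rmult 1 (map lam k).

Definition eps_init (lam : nat -> R) (d : nat) : R := sqrt (lam 0%nat ^ d).

(* "n(eps,d) <= N": every finite duplicate-free family of elements of
   { k in nabla_d : lambda_{d,k} > eps^2 } has at most N elements,
   i.e. # of this set is <= N. *)
Definition info_le (lam : nat -> R) (I : nat -> nat -> bool)
    (eps : R) (d : nat) (N : R) : Prop :=
  forall ks : list (list nat), NoDup ks ->
    (forall k, In k ks -> nabla_sym I d k /\ lam_dk lam k > eps ^ 2) ->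
    INR (length ks) <= N.

Definition poly_tractable (lam : nat -> R) (I : nat -> nat -> bool) : Prop :=
  exists C p q : R, C > 0 /\ p > 0 /\ q >= 0 /\
    forall (d : nat) (e : R), (1 <= d)%nat -> 0 < e <= 1 ->
      info_le lam I (e * eps_init lam d) d
        (C * Rpower e (- p) * Rpower (INR d) q).

Definition strongly_poly_tractable (lam : nat -> R) (I : nat -> nat -> bool) : Prop :=
  exists C p : R, C > 0 /\ p > 0 /\
    forall (d : nat) (e : R), (1 <= d)%nat -> 0 < e <= 1 ->
      info_le lam I (e * eps_init lam d) d (C * Rpower e (- p)).

(** With [mu m = lam m / lam 0], an index k of length d lies above the
    threshold [(e * eps_init d)^2] iff [prod mu(k_l) > e^2]; an index of
    [nabla_d] consists of [b_d] free entries and a nondecreasing list of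
    length [#I_d].
    Necessity: singletons for d = 1 give [lam in l_p]; if [lam 0 = lam 1]
    the [d+1] indices [0..0 1..1] force [n(1/2,d) > d]; blocks of free
    coordinates with one index 1 each bound [b_d] by [O(ln K)] when
    [n(e,d) <= K e^-p].  Sufficiency: for weights [w = mu^tau] with total
    sum [S0] and tail beyond some [J] (with [lam J < lam 0]) at most 1/2, a
    Markov argument gives [n(e,d) <= 2 e^(-2 tau) S0^(b_d) (#I_d+1)^(J-1)];
    [J = 1] yields strong and general [J] polynomial tractability. *)

From Stdlib Require Import Reals List Lia Lra Arith Sorted.
Import ListNotations.
Open Scope R_scope.

Definition lsum {A} (f : A -> R) (l : list A) : R :=
  fold_right (fun x acc => f x + acc) 0 l.

Lemma lsum_app {A} (f : A -> R) l1 l2 :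
  lsum f (l1 ++ l2) = lsum f l1 + lsum f l2.
Proof. induction l1; simpl; [lra | rewrite IHl1; lra]. Qed.

Lemma lsum_flat_map {A B} (f : B -> R) (g : A -> list B) l :
  lsum f (flat_map g l) = lsum (fun x => lsum f (g x)) l.
Proof. induction l; simpl; [auto | rewrite lsum_app, IHl; auto]. Qed.

Lemma lsum_map {A B} (f : B -> R) (g : A -> B) l :
  lsum f (map g l) = lsum (fun x => f (g x)) l.
Proof. induction l; simpl; [auto | rewrite IHl; auto]. Qed.

Lemma lsum_ext {A} (f g : A -> R) l :
  (forall x, In x l -> f x = g x) -> lsum f l = lsum g l.
Proof.
  induction l as [|x l IH]; simpl; intros H; auto.
  rewrite H, IH; auto.
Qed.

Lemma lsum_le {A} (f g : A -> R) l :
  (forall x, In x l -> f x <= g x) -> lsum f l <= lsum g l.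
Proof.
  induction l as [|x l IH]; simpl; intros H; [lra|].
  pose proof (H x (or_introl eq_refl)). assert (lsum f l <= lsum g l) by auto. lra.
Qed.

Lemma lsum_nonneg {A} (f : A -> R) l :
  (forall x, 0 <= f x) -> 0 <= lsum f l.
Proof.
  intros H. induction l as [|x l IH]; simpl; [lra|]. pose proof (H x). lra.
Qed.

Lemma lsum_const {A} (c : R) (l : list A) : lsum (fun _ => c) l = INR (length l) * c.
Proof. induction l; [simpl; lra|]. simpl length. rewrite S_INR. simpl. rewrite IHl. lra. Qed.

Lemma lsum_scal {A} (c : R) (f : A -> R) l : lsum (fun x => c * f x) l = c * lsum f l.
Proof. induction l; simpl; [lra | rewrite IHl; lra]. Qed.

Lemma lsum_scal_r {A} (c : R) (f : A -> R) l : lsum (fun x => f x * c) l = lsum f l * c.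
Proof. induction l; simpl; [lra | rewrite IHl; lra]. Qed.

Section NoDupSum.
Variables (A : Type) (dec : forall x y : A, {x = y} + {x <> y}) (f : A -> R).
Hypothesis f_nonneg : forall y, 0 <= f y.

Lemma lsum_remove_le x l : lsum f (remove dec x l) <= lsum f l.
Proof.
  induction l as [|y l IH]; simpl; [lra|].
  destruct (dec x y); simpl; [pose proof (f_nonneg y)|]; lra.
Qed.

Lemma lsum_remove x l : In x l -> lsum f (remove dec x l) + f x <= lsum f l.
Proof.
  induction l as [|y l IH]; simpl; [tauto|]. intros Hin.
  destruct (dec x y) as [<-|Hne]; simpl.
  - pose proof (lsum_remove_le x l). lra.
  - destruct Hin as [->|Hin]; [congruence|]. specialize (IH Hin). lra.
Qed.

(** A sum of nonnegative terms over a duplicate-free sublist is bounded by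
    the sum over the whole list; this turns a covering into a bound. *)
Lemma NoDup_incl_lsum l1 l2 : NoDup l1 -> incl l1 l2 -> lsum f l1 <= lsum f l2.
Proof.
  intros Hn. revert l2. induction Hn as [|x l1 Hx Hn IH]; intros l2 Hi; simpl.
  - apply lsum_nonneg, f_nonneg.
  - assert (Hx2 : In x l2) by (apply Hi; simpl; auto).
    assert (Hrem : incl l1 (remove dec x l2)).
    { intros y Hy. apply in_in_remove; [intros ->; tauto | apply Hi; simpl; auto]. }
    pose proof (IH _ Hrem). pose proof (lsum_remove x l2 Hx2). lra.
Qed.

End NoDupSum.

Lemma lsum_seq0_le f l : (forall m, 0 <= f m) -> infinite_sum f l ->
  forall M, lsum f (seq 0 M) <= l.
Proof.
  intros Hf Hl.
  assert (Hpart : forall n, sum_f_R0 f n <= l).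
  { apply growing_ineq; [intros n; simpl; pose proof (Hf (S n)); lra | exact Hl]. }
  assert (Hseq : forall n, lsum f (seq 0 (S n)) = sum_f_R0 f n).
  { induction n as [|n IH]; [simpl; lra|].
    rewrite seq_S, lsum_app, IH. simpl. lra. }
  intros [|M]; [simpl; pose proof (Hpart 0%nat); simpl in *; pose proof (Hf 0%nat); lra|].
  rewrite Hseq. apply Hpart.
Qed.

(** [lam_dk g k] is the product of [g] over the entries of [k]; we use it for
    any weight [g], not only for the eigenvalues. *)

Lemma lam_dk_app g k1 k2 : lam_dk g (k1 ++ k2) = lam_dk g k1 * lam_dk g k2.
Proof. unfold lam_dk; induction k1; simpl; [lra | rewrite IHk1; lra]. Qed.

Lemma lam_dk_repeat g x n : lam_dk g (repeat x n) = g x ^ n.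
Proof. unfold lam_dk; induction n; simpl; [lra | rewrite IHn; lra]. Qed.

Lemma lam_dk_nonneg g k : (forall m, 0 <= g m) -> 0 <= lam_dk g k.
Proof. intros H; unfold lam_dk; induction k; simpl; [lra|]. pose proof (H a); nra. Qed.

Lemma lam_dk_le1 g k : (forall m, 0 <= g m <= 1) -> lam_dk g k <= 1.
Proof.
  intros H. induction k as [|a k IH]; [unfold lam_dk; simpl; lra|].
  change (lam_dk g (a :: k)) with (g a * lam_dk g k).
  pose proof (H a). assert (0 <= lam_dk g k) by (apply lam_dk_nonneg; apply H). nra.
Qed.

(** Factoring out a constant; with [c = lam 0] this reads
    [lam_{d,k} = lam_0^d * prod mu(k_l)]. *)
Lemma lam_dk_scale g c k : c <> 0 ->
  lam_dk g k = c ^ length k * lam_dk (fun m => g m / c) k.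
Proof. intros H. unfold lam_dk. induction k; simpl; [lra|]. rewrite IHk. field; auto. Qed.

(** [pat I d] lists, for the positions [1..d], whether they belong to [I_d];
    [nabP p k] is the monotonicity constraint of [nabla_d] stated for an
    arbitrary pattern [p] (0-based positions). *)

Definition pat (I : nat -> nat -> bool) (d : nat) : list bool := map (I d) (seq 1 d).

Definition nabP (p : list bool) (k : list nat) : Prop :=
  length k = length p /\
  forall i j, (i < j)%nat -> (j < length p)%nat -> nth i p false = true ->
    nth j p false = true -> (nth i k 0 <= nth j k 0)%nat.

Definition nfalse (p : list bool) : nat := length (filter negb p).
Definition ntrue (p : list bool) : nat := length (filter (fun b => b) p).

Lemma pat_length I d : length (pat I d) = d.
Proof. unfold pat; rewrite length_map, length_seq; auto. Qed.

Lemma pat_nth I d i : (i < d)%nat -> nth i (pat I d) false = I d (S i).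
Proof.
  intros H. unfold pat.
  rewrite nth_indep with (d' := I d 0%nat) by (rewrite length_map, length_seq; auto).
  rewrite map_nth, seq_nth by auto. f_equal; lia.
Qed.

Lemma nabla_sym_pat I d k : nabla_sym I d k <-> nabP (pat I d) k.
Proof.
  unfold nabla_sym, nabP. rewrite pat_length. split; intros [Hl H]; split; auto.
  - intros i j Hij Hj Hi Hj'. rewrite pat_nth in Hi, Hj' by lia.
    specialize (H (S i) (S j)). rewrite !Nat.sub_succ, !Nat.sub_0_r in H.
    apply H; auto; lia.
  - intros i j H1 Hij Hj Hi Hj'.
    apply H; try lia; rewrite pat_nth by lia;
      [replace (S (i - 1)) with i by lia | replace (S (j - 1)) with j by lia]; auto.
Qed.

Lemma nfalse_pat I d : nfalse (pat I d) = b_of I d.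
Proof.
  unfold nfalse, pat, b_of, card_I.
  assert (Hsplit : forall l, (length (filter negb (map (I d) l)) +
                              length (filter (I d) l))%nat = length l).
  { induction l as [|a l IH]; simpl; auto. destruct (I d a); simpl; lia. }
  pose proof (Hsplit (seq 1 d)). rewrite length_seq in *. lia.
Qed.

Lemma ntrue_pat I d : ntrue (pat I d) = card_I I d.
Proof.
  unfold ntrue, pat, card_I. induction (seq 1 d); simpl; auto.
  destruct (I d a); simpl; lia.
Qed.

Lemma card_I_le I d : (card_I I d <= d)%nat.
Proof.
  rewrite <- ntrue_pat. rewrite <- (pat_length I d) at 2. unfold ntrue.
  generalize (pat I d). intros p. induction p as [|[|] p]; simpl; lia.
Qed.

Definition mu (lam : nat -> R) (m : nat) : R := lam m / lam 0%nat.

Lemma above_threshold_iff lam d k e : 0 < lam 0%nat -> length k = d ->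
  lam_dk lam k > (e * eps_init lam d) ^ 2 <-> lam_dk (mu lam) k > e ^ 2.
Proof.
  intros H0 Hlen. unfold eps_init.
  rewrite Rpow_mult_distr, pow2_sqrt by (apply pow_le; lra).
  rewrite (lam_dk_scale lam (lam 0%nat)) by lra. fold (mu lam). rewrite Hlen.
  assert (0 < lam 0%nat ^ d) by (apply pow_lt; auto).
  split; intros; nra.
Qed.

Lemma info_le_mono lam I eps d N1 N2 :
  info_le lam I eps d N1 -> N1 <= N2 -> info_le lam I eps d N2.
Proof. intros H Hn ks Hk Hks. specialize (H ks Hk Hks). lra. Qed.

Lemma info_le_family lam I e d N ks : 0 < lam 0%nat ->
  info_le lam I (e * eps_init lam d) d N -> NoDup ks ->
  (forall k, In k ks -> nabP (pat I d) k /\ lam_dk (mu lam) k > e ^ 2) ->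
  INR (length ks) <= N.
Proof.
  intros H0 Hinfo Hn Hks. apply Hinfo; auto. intros k Hk.
  destruct (Hks k Hk) as [Hnab Hgt]. split; [apply nabla_sym_pat; auto|].
  apply above_threshold_iff; auto. destruct Hnab as [Hlen _]. rewrite pat_length in Hlen; auto.
Qed.

Lemma NoDup_map_inj {A B} (f : A -> B) l :
  NoDup l -> (forall x y, In x l -> In y l -> f x = f y -> x = y) -> NoDup (map f l).
Proof. intros Hn H. apply NoDup_map_NoDup_ForallPairs; auto. Qed.

Lemma NoDup_flat_map_inj {A B} (f : A -> list B) l :
  NoDup l -> (forall x, In x l -> NoDup (f x)) ->
  (forall x y z, In x l -> In y l -> In z (f x) -> In z (f y) -> x = y) ->
  NoDup (flat_map f l).
Proof.
  induction 1 as [|x l Hx Hn IH]; intros H1 H2; simpl; [constructor|].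
  apply NoDup_app; [apply H1; simpl; auto | |].
  - apply IH; [intros; apply H1 | intros; eapply H2]; simpl; eauto.
  - intros z Hz Hz'. apply in_flat_map in Hz'. destruct Hz' as [y [Hy Hzy]].
    assert (x = y) by (eapply H2; simpl; eauto). subst; tauto.
Qed.

Lemma length_flat_map_const {A B} (f : A -> list B) l n :
  (forall x, In x l -> length (f x) = n) -> length (flat_map f l) = (length l * n)%nat.
Proof. induction l; simpl; intros H; auto. rewrite length_app, H, IHl; auto. Qed.

Lemma app_inv_length {T} (x y a b : list T) :
  length x = length y -> x ++ a = y ++ b -> x = y /\ a = b.
Proof.
  revert y; induction x as [|u x IH]; intros [|v y] H E; simpl in *; try lia; auto.
  injection E; intros E1 ->. destruct (IH y) as [-> ->]; auto.
Qed.

Fixpoint fillp (p : list bool) (v : list nat) : list nat :=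
  match p with
  | [] => []
  | true :: p' => 0%nat :: fillp p' v
  | false :: p' => hd 0%nat v :: fillp p' (tl v)
  end.

Lemma fillp_length p v : length (fillp p v) = length p.
Proof. revert v; induction p as [|[|] p IH]; intros v; simpl; auto. Qed.

Lemma fillp_nab p v : nabP p (fillp p v).
Proof.
  split; [apply fillp_length|]. intros i j _ _ Hi _.
  enough (E : nth i (fillp p v) 0%nat = 0%nat) by (rewrite E; lia).
  revert v i Hi; induction p as [|[|] p IH]; intros v [|i]; simpl; auto; discriminate.
Qed.

Lemma fillp_inj p v1 v2 : length v1 = nfalse p -> length v2 = nfalse p ->
  fillp p v1 = fillp p v2 -> v1 = v2.
Proof.
  unfold nfalse. revert v1 v2; induction p as [|[|] p IH]; intros v1 v2 H1 H2 H; simpl in *.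
  - destruct v1, v2; simpl in *; auto; lia.
  - injection H; intros; apply IH; auto.
  - destruct v1 as [|x1 v1], v2 as [|x2 v2]; simpl in *; try lia.
    injection H; intros; f_equal; auto.
Qed.

Lemma fillp_weight g p v : g 0%nat = 1 -> length v = nfalse p ->
  lam_dk g (fillp p v) = lam_dk g v.
Proof.
  unfold nfalse, lam_dk. intros H0. revert v; induction p as [|[|] p IH]; intros v H; simpl in *.
  - destruct v; simpl in *; auto; lia.
  - rewrite H0, IH; auto; lra.
  - destruct v as [|x v]; simpl in *; try lia. rewrite IH; auto.
Qed.

Definition unitv (s i : nat) : list nat := repeat 0%nat i ++ 1%nat :: repeat 0%nat (s - 1 - i).
Definition units (s : nat) : list (list nat) := map (unitv s) (seq 0 s).

Lemma unitv_nth s i j : (i < s)%nat -> (j < s)%nat ->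
  nth j (unitv s i) 0%nat = if Nat.eqb i j then 1%nat else 0%nat.
Proof.
  intros Hi Hj. unfold unitv. destruct (lt_eq_lt_dec j i) as [[H|H]|H].
  - rewrite app_nth1 by (rewrite repeat_length; lia). rewrite nth_repeat.
    destruct (Nat.eqb_spec i j); auto; lia.
  - subst. rewrite app_nth2 by (rewrite repeat_length; lia).
    rewrite repeat_length, Nat.sub_diag, Nat.eqb_refl. auto.
  - rewrite app_nth2 by (rewrite repeat_length; lia). rewrite repeat_length.
    destruct (j - i)%nat eqn:E; [lia|]. simpl. rewrite nth_repeat.
    destruct (Nat.eqb_spec i j); auto; lia.
Qed.

Lemma units_props g s : g 0%nat = 1 ->
  NoDup (units s) /\ length (units s) = s /\
  forall x, In x (units s) -> length x = s /\ lam_dk g x = g 1%nat.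
Proof.
  intros H0. unfold units. split; [|split].
  - apply NoDup_map_inj; [apply seq_NoDup|]. intros x y Hx Hy E. apply in_seq in Hx, Hy.
    pose proof (f_equal (fun l => nth x l 0%nat) E) as E'. simpl in E'.
    rewrite !unitv_nth, Nat.eqb_refl in E' by lia.
    destruct (Nat.eqb_spec y x); auto; discriminate.
  - rewrite length_map, length_seq; auto.
  - intros x Hx. apply in_map_iff in Hx. destruct Hx as [i [<- Hi]]. apply in_seq in Hi.
    unfold unitv. rewrite length_app, !repeat_length. simpl. rewrite repeat_length.
    split; [lia|]. rewrite lam_dk_app, lam_dk_repeat.
    change (lam_dk g (1%nat :: repeat 0%nat (s - 1 - i)))
      with (g 1%nat * lam_dk g (repeat 0%nat (s - 1 - i))).
    rewrite lam_dk_repeat, H0, !pow1. lra.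
Qed.

Fixpoint blocks (s j : nat) : list (list nat) :=
  match j with
  | O => [[]]
  | S j' => flat_map (fun x => map (fun y => x ++ y) (blocks s j')) (units s)
  end.

Lemma blocks_props g s j : g 0%nat = 1 ->
  NoDup (blocks s j) /\ length (blocks s j) = (s ^ j)%nat /\
  forall x, In x (blocks s j) -> length x = (j * s)%nat /\ lam_dk g x = g 1%nat ^ j.
Proof.
  intros H0. destruct (units_props g s H0) as [Hu1 [Hu2 Hu3]].
  induction j as [|j [IH1 [IH2 IH3]]]; simpl.
  - split; [repeat constructor; simpl; tauto|]. split; auto. intros x [<-|[]]. split; auto.
  - split; [|split].
    + apply NoDup_flat_map_inj; auto.
      * intros x Hx. apply NoDup_map_inj; auto. intros y z _ _ E. apply app_inv_head in E; auto.
      * intros x y z Hx Hy Hz1 Hz2. apply in_map_iff in Hz1, Hz2.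
        destruct Hz1 as [b1 [<- _]]. destruct Hz2 as [b2 [E _]].
        apply app_inv_length in E; [destruct E; auto|].
        rewrite (proj1 (Hu3 x Hx)), (proj1 (Hu3 y Hy)); auto.
    + rewrite (length_flat_map_const _ _ (s ^ j)%nat), Hu2; [lia|].
      intros x _. rewrite length_map; auto.
    + intros x Hx. apply in_flat_map in Hx. destruct Hx as [u [Hu Hx]]. apply in_map_iff in Hx.
      destruct Hx as [y [<- Hy]]. destruct (Hu3 u Hu) as [Q1 Q2]. destruct (IH3 y Hy) as [Q3 Q4].
      rewrite length_app, lam_dk_app. split; [lia|]. rewrite Q2, Q4; lra.
Qed.

Definition block_family (p : list bool) (s j : nat) : list (list nat) :=
  map (fun x => fillp p (x ++ repeat 0%nat (nfalse p - j * s))) (blocks s j).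

Lemma block_family_props g p s j : g 0%nat = 1 -> (j * s <= nfalse p)%nat ->
  NoDup (block_family p s j) /\ length (block_family p s j) = (s ^ j)%nat /\
  forall k, In k (block_family p s j) -> nabP p k /\ lam_dk g k = g 1%nat ^ j.
Proof.
  intros H0 Hjs. destruct (blocks_props g s j H0) as [B1 [B2 B3]].
  assert (Hlen : forall x, In x (blocks s j) ->
            length (x ++ repeat 0%nat (nfalse p - j * s)) = nfalse p).
  { intros x Hx. rewrite length_app, repeat_length, (proj1 (B3 x Hx)). lia. }
  unfold block_family. split; [|split].
  - apply NoDup_map_inj; auto. intros x y Hx Hy E.
    apply fillp_inj in E; [|apply Hlen; auto..]. apply app_inv_tail in E; auto.
  - rewrite length_map; auto.
  - intros k Hk. apply in_map_iff in Hk. destruct Hk as [x [<- Hx]].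
    split; [apply fillp_nab|]. rewrite fillp_weight by auto.
    rewrite lam_dk_app, lam_dk_repeat, H0, pow1, (proj2 (B3 x Hx)). lra.
Qed.

Definition step_family (d : nat) : list (list nat) :=
  map (fun t => repeat 0%nat t ++ repeat 1%nat (d - t)) (seq 0 (S d)).

Lemma step_nth d t i : (t <= d)%nat -> (i < d)%nat ->
  nth i (repeat 0%nat t ++ repeat 1%nat (d - t)) 0%nat = if Nat.ltb i t then 0%nat else 1%nat.
Proof.
  intros Ht Hi. destruct (Nat.ltb_spec i t).
  - rewrite app_nth1 by (rewrite repeat_length; lia). apply nth_repeat.
  - rewrite app_nth2 by (rewrite repeat_length; lia). rewrite repeat_length.
    apply nth_repeat_lt. lia.
Qed.

Lemma step_family_props g p : g 0%nat = 1 -> g 1%nat = 1 ->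
  NoDup (step_family (length p)) /\ length (step_family (length p)) = S (length p) /\
  forall k, In k (step_family (length p)) -> nabP p k /\ lam_dk g k = 1.
Proof.
  intros H0 H1. set (d := length p). unfold step_family. split; [|split].
  - apply NoDup_map_inj; [apply seq_NoDup|]. intros x y Hx Hy E. apply in_seq in Hx, Hy.
    destruct (lt_eq_lt_dec x y) as [[H|H]|H]; auto;
      [pose proof (f_equal (fun l => nth x l 0%nat) E) as E'
      |pose proof (f_equal (fun l => nth y l 0%nat) E) as E'];
      simpl in E'; rewrite !step_nth in E' by lia;
      repeat match type of E' with context [Nat.ltb ?a ?b] => destruct (Nat.ltb_spec a b) end; lia.
  - rewrite length_map, length_seq; auto.
  - intros k Hk. apply in_map_iff in Hk. destruct Hk as [t [<- Ht]]. apply in_seq in Ht. split.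
    + split; [rewrite length_app, !repeat_length; fold d; lia|].
      intros i j Hij Hj _ _. fold d in Hj.
      rewrite !step_nth by lia. destruct (Nat.ltb_spec i t), (Nat.ltb_spec j t); lia.
    + rewrite lam_dk_app, !lam_dk_repeat, H0, H1, !pow1. lra.
Qed.

Fixpoint interleave (p : list bool) (u s : list nat) : list nat :=
  match p with
  | [] => []
  | true :: p' => hd 0%nat s :: interleave p' u (tl s)
  | false :: p' => hd 0%nat u :: interleave p' (tl u) s
  end.

Fixpoint extract (p : list bool) (k : list nat) (b0 : bool) : list nat :=
  match p, k with
  | x :: p', y :: k' => if Bool.eqb x b0 then y :: extract p' k' b0 else extract p' k' b0
  | _, _ => []
  end.

Lemma interleave_extract p k : length k = length p ->
  interleave p (extract p k false) (extract p k true) = k.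
Proof.
  revert k; induction p as [|[|] p IH]; intros [|y k] H; simpl in *; try lia; auto;
    f_equal; apply IH; lia.
Qed.

Lemma extract_length p k : length k = length p ->
  length (extract p k false) = nfalse p /\ length (extract p k true) = ntrue p.
Proof.
  unfold nfalse, ntrue. revert k; induction p as [|[|] p IH]; intros [|y k] H;
    simpl in *; try lia; auto; destruct (IH k) as [H1 H2]; lia.
Qed.

Lemma extract_in p k b y : In y (extract p k b) -> In y k.
Proof.
  revert k; induction p as [|x p IH]; intros [|z k]; simpl; try tauto.
  destruct (Bool.eqb x b); simpl; intuition.
Qed.

Lemma extract_in_nth p k y : In y (extract p k true) ->
  exists j, (j < length p)%nat /\ nth j p false = true /\ nth j k 0%nat = y.
Proof.
  revert k; induction p as [|x p IH]; intros [|z k]; simpl; try tauto.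
  destruct x; simpl.
  - intros [<-|H]; [exists 0%nat; simpl; repeat split; auto; lia|].
    destruct (IH k H) as [j [? [? ?]]]. exists (S j); simpl; repeat split; auto; lia.
  - intros H. destruct (IH k H) as [j [? [? ?]]]. exists (S j); simpl; repeat split; auto; lia.
Qed.

Lemma nab_sorted p k : nabP p k -> StronglySorted le (extract p k true).
Proof.
  revert k; induction p as [|x p IH]; intros [|z k] [Hl H]; simpl in *; try constructor; try lia.
  assert (Hk : nabP p k).
  { split; [lia|]. intros i j Hij Hj Hi Hj'. apply (H (S i) (S j)); simpl; auto; lia. }
  destruct x; simpl.
  - constructor; [apply IH; auto|]. apply Forall_forall. intros y Hy.
    destruct (extract_in_nth _ _ _ Hy) as [j [Hj1 [Hj2 <-]]]. apply (H 0%nat (S j)); simpl; auto; lia.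
  - apply IH; auto.
Qed.

Lemma lam_dk_interleave g p u s : length u = nfalse p -> length s = ntrue p ->
  lam_dk g (interleave p u s) = lam_dk g u * lam_dk g s.
Proof.
  unfold nfalse, ntrue, lam_dk. revert u s; induction p as [|[|] p IH]; intros u s Hu Hs; simpl in *.
  - destruct u, s; simpl in *; try lia; lra.
  - destruct s as [|y s]; simpl in *; try lia. rewrite IH; auto; lra.
  - destruct u as [|y u]; simpl in *; try lia. rewrite IH; auto; lra.
Qed.

Definition cnt (i : nat) (s : list nat) : nat := length (filter (Nat.eqb i) s).

Fixpoint reps_from (i : nat) (c : list nat) : list nat :=
  match c with [] => [] | x :: c' => repeat i x ++ reps_from (S i) c' end.

Lemma filter_filter_imp (f g : nat -> bool) s : (forall x, f x = true -> g x = true) ->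
  filter f (filter g s) = filter f s.
Proof.
  intros H; induction s as [|x s IH]; simpl; auto.
  destruct (g x) eqn:E; simpl; destruct (f x) eqn:E'; rewrite ?IH; auto.
  rewrite H in E; auto; discriminate.
Qed.

Lemma sorted_filter f s : StronglySorted le s -> StronglySorted le (filter f s).
Proof.
  induction 1 as [|a s Hs IH Ha]; simpl; [constructor|]. destruct (f a); auto. constructor; auto.
  rewrite Forall_forall in *. intros x Hx. apply filter_In in Hx. apply Ha; tauto.
Qed.

Lemma sorted_split_min i s : StronglySorted le s -> Forall (le i) s ->
  s = repeat i (cnt i s) ++ filter (Nat.ltb i) s.
Proof.
  unfold cnt. induction 1 as [|x s Hs IH Hx]; intros Hi; simpl; auto.
  inversion Hi; subst. destruct (Nat.eqb_spec i x).
  - subst. rewrite Nat.ltb_irrefl. simpl. f_equal. apply IH; auto.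
  - assert (Hlt : (i < x)%nat) by lia. apply Nat.ltb_lt in Hlt as ->.
    assert (Hbig : filter (Nat.eqb i) s = [] /\ filter (Nat.ltb i) s = s).
    { clear IH Hs Hi H2. induction Hx as [|y s Hy Hs IH]; simpl; auto.
      destruct (Nat.eqb_spec i y); [lia|]. destruct (Nat.ltb_spec i y); [|lia].
      destruct IH as [-> ->]; auto. }
    destruct Hbig as [-> ->]. auto.
Qed.

Lemma sorted_split_multi n i s : StronglySorted le s -> Forall (le i) s ->
  s = reps_from i (map (fun j => cnt j s) (seq i n)) ++ filter (fun x => Nat.leb (i + n) x) s.
Proof.
  revert i s; induction n as [|n IH]; intros i s Hs Hi; simpl.
  - rewrite Nat.add_0_r. clear Hs. induction Hi as [|y s Hy Hs IH]; simpl; auto.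
    destruct (Nat.leb_spec i y); [|lia]. f_equal; auto.
  - rewrite (sorted_split_min i s Hs Hi) at 1. rewrite <- app_assoc. f_equal.
    set (s1 := filter (Nat.ltb i) s).
    assert (Hs1 : StronglySorted le s1) by (apply sorted_filter; auto).
    assert (Hi1 : Forall (le (S i)) s1).
    { apply Forall_forall. intros x Hx. apply filter_In in Hx.
      destruct Hx as [_ Hx]. apply Nat.ltb_lt in Hx. lia. }
    rewrite (IH (S i) s1 Hs1 Hi1) at 1. f_equal.
    + f_equal. apply map_ext_in. intros j Hj. apply in_seq in Hj. unfold cnt, s1.
      rewrite filter_filter_imp; auto. intros x E. apply Nat.eqb_eq in E; subst.
      apply Nat.ltb_lt; lia.
    + unfold s1. replace (i + S n)%nat with (S i + n)%nat by lia. apply filter_filter_imp.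
      intros x E. apply Nat.leb_le in E. apply Nat.ltb_lt. lia.
Qed.

Fixpoint box (n lo hi : nat) : list (list nat) :=
  match n with
  | O => [[]]
  | S n' => flat_map (fun m => map (cons m) (box n' lo hi)) (seq lo (S hi - lo))
  end.

Lemma box_in n lo hi x : length x = n -> Forall (fun m => lo <= m <= hi)%nat x ->
  In x (box n lo hi).
Proof.
  revert x; induction n as [|n IH]; intros [|y x] Hl Hf; simpl in *; try lia; auto.
  inversion Hf; subst; cbv beta in *. apply in_flat_map. exists y.
  split; [apply in_seq; destruct lo; lia | apply in_map, IH; auto].
Qed.

Lemma box_mem_length n lo hi x : In x (box n lo hi) -> length x = n.
Proof.
  revert x; induction n as [|n IH]; intros x Hx; simpl in Hx.
  - destruct Hx as [<-|[]]; auto.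
  - apply in_flat_map in Hx. destruct Hx as [m [_ Hx]]. apply in_map_iff in Hx.
    destruct Hx as [y [<- Hy]]. simpl. f_equal; auto.
Qed.

Lemma box_length n lo hi : length (box n lo hi) = ((S hi - lo) ^ n)%nat.
Proof.
  induction n as [|n IH]; auto. simpl box.
  rewrite (length_flat_map_const _ _ ((S hi - lo) ^ n)%nat), length_seq; [simpl; lia|].
  intros; rewrite length_map; auto.
Qed.

Lemma box_sum g n lo hi : lsum (lam_dk g) (box n lo hi) = lsum g (seq lo (S hi - lo)) ^ n.
Proof.
  induction n as [|n IH]; [unfold lsum, lam_dk; simpl; lra|].
  simpl box. rewrite lsum_flat_map, <- tech_pow_Rmult, <- IH, <- lsum_scal_r.
  apply lsum_ext. intros m _. rewrite lsum_map, <- lsum_scal. apply lsum_ext. intros k _; reflexivity.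
Qed.

(** ** Covering the admissible indices by an explicit list *)

(** A sorted list of length [a] is [0..0] followed by [reps_from 1 c]
    (multiplicities [c] of [1..J-1]) and by its entries [v >= J]. *)
Definition sorted_word (a : nat) (c v : list nat) : list nat :=
  repeat 0%nat (a - length (reps_from 1 c ++ v)) ++ reps_from 1 c ++ v.

Definition tails (a J M : nat) : list (list nat) :=
  flat_map (fun j => box j J M) (seq 0 (S a)).

Definition sorted_cands (a J M : nat) : list (list nat) :=
  flat_map (fun c => flat_map (fun v =>
    if Nat.leb (length (reps_from 1 c ++ v)) a then [sorted_word a c v] else [])
    (tails a J M)) (box (J - 1) 0 a).

Lemma filter_length_le {T} (f : T -> bool) l : (length (filter f l) <= length l)%nat.
Proof. induction l; simpl; auto. destruct (f a); simpl; lia. Qed.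

Lemma sorted_cover a J M s : (1 <= J)%nat -> StronglySorted le s -> length s = a ->
  (forall y, In y s -> y <= M)%nat -> In s (sorted_cands a J M).
Proof.
  intros HJ Hs Hsl HM. destruct J as [|J']; [lia|]. simpl (S J' - 1)%nat.
  assert (Hs0 : Forall (le 0) s) by (apply Forall_forall; intros; lia).
  pose proof (sorted_split_multi (S J') 0 s Hs Hs0) as E.
  change (seq 0 (S J')) with (0%nat :: seq 1 J') in E. change (0 + S J')%nat with (S J') in E.
  cbn [map reps_from] in E. rewrite <- app_assoc in E.
  set (c := map (fun j => cnt j s) (seq 1 J')) in E.
  set (v := filter (fun x => Nat.leb (S J') x) s) in E.
  assert (Hlen : length s = (cnt 0 s + length (reps_from 1 c ++ v))%nat).
  { rewrite E at 1. rewrite !length_app, repeat_length. auto. }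
  unfold sorted_cands. apply in_flat_map. exists c. split.
  { apply box_in; [unfold c; rewrite length_map, length_seq; lia|].
    apply Forall_forall. intros y Hy. unfold c in Hy. apply in_map_iff in Hy.
    destruct Hy as [j [<- _]]. split; [lia|]. rewrite <- Hsl. apply filter_length_le. }
  apply in_flat_map. exists v. split.
  { unfold tails. apply in_flat_map. exists (length v). split.
    - apply in_seq. unfold v. pose proof (filter_length_le (fun x => Nat.leb (S J') x) s). lia.
    - apply box_in; auto. apply Forall_forall. intros y Hy. unfold v in Hy.
      apply filter_In in Hy. destruct Hy as [Hy1 Hy2]. apply Nat.leb_le in Hy2. auto. }
  assert (Hc : Nat.leb (length (reps_from 1 c ++ v)) a = true) by (apply Nat.leb_le; lia).
  rewrite Hc. left. unfold sorted_word.
  replace (a - length (reps_from 1 c ++ v))%nat with (cnt 0 s) by lia. auto.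
Qed.

Lemma sorted_cands_length a J M s : In s (sorted_cands a J M) -> length s = a.
Proof.
  unfold sorted_cands. intros Hs. apply in_flat_map in Hs. destruct Hs as [c [_ Hs]].
  apply in_flat_map in Hs. destruct Hs as [v [_ Hs]].
  destruct (Nat.leb_spec (length (reps_from 1 c ++ v)) a); [|destruct Hs].
  destruct Hs as [<-|[]]. unfold sorted_word. rewrite length_app, repeat_length. lia.
Qed.

Lemma geometric_le_2 r n : 0 <= r <= 1/2 -> lsum (fun j => r ^ j) (seq 0 n) <= 2.
Proof.
  intros Hr. enough (lsum (fun j => r ^ j) (seq 0 n) <= 2 - 2 * r ^ n)
    by (pose proof (pow_le r n); lra).
  induction n as [|n IH]; [simpl; lra|].
  rewrite seq_S, lsum_app. simpl. simpl in IH. pose proof (pow_le r n). nra.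
Qed.

(** Weight of the sorted candidates: at most [(a+1)^(J-1)] choices of the
    multiplicities, times a geometric series in the tail weight. *)
Lemma sorted_cands_sum w a J M : w 0%nat = 1 -> (forall m, 0 <= w m <= 1) ->
  lsum (fun m => w m) (seq J (S M - J)) <= 1/2 ->
  lsum (lam_dk w) (sorted_cands a J M) <= INR ((S a) ^ (J - 1)) * 2.
Proof.
  intros H0 Hw Htail.
  assert (Hnn : forall k, 0 <= lam_dk w k) by (intros; apply lam_dk_nonneg; apply Hw).
  set (T := lsum (lam_dk w) (tails a J M)).
  assert (HT : T <= 2).
  { unfold T, tails. rewrite lsum_flat_map.
    rewrite (lsum_ext _ (fun j => lsum w (seq J (S M - J)) ^ j)) by (intros; apply box_sum).
    apply geometric_le_2. split; [apply lsum_nonneg; apply Hw | auto]. }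
  unfold sorted_cands. rewrite lsum_flat_map.
  apply Rle_trans with (lsum (fun _ => T) (box (J - 1) 0 a)).
  - apply lsum_le. intros c _. rewrite lsum_flat_map. apply lsum_le. intros v _.
    destruct (Nat.leb (length (reps_from 1 c ++ v)) a); simpl; [|apply Hnn].
    unfold sorted_word. rewrite !lam_dk_app, lam_dk_repeat, H0, pow1.
    pose proof (lam_dk_le1 w (reps_from 1 c) Hw). pose proof (Hnn (reps_from 1 c)).
    pose proof (Hnn v). nra.
  - rewrite lsum_const, box_length, Nat.sub_0_r.
    apply Rmult_le_compat_l; [apply pos_INR | exact HT].
Qed.

Definition cand (p : list bool) (J M : nat) : list (list nat) :=
  flat_map (fun u => map (interleave p u) (sorted_cands (ntrue p) J M)) (box (nfalse p) 0 M).

Lemma cover p J M k : (1 <= J)%nat -> nabP p k -> (forall y, In y k -> y <= M)%nat ->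
  In k (cand p J M).
Proof.
  intros HJ Hk HM. destruct (extract_length p k (proj1 Hk)) as [Hu Hs].
  rewrite <- (interleave_extract p k (proj1 Hk)). unfold cand.
  apply in_flat_map. exists (extract p k false). split.
  - apply box_in; auto. apply Forall_forall. intros y Hy.
    split; [lia | apply HM; eapply extract_in; eauto].
  - apply in_map, sorted_cover; auto; [apply nab_sorted; auto|].
    intros y Hy. apply HM; eapply extract_in; eauto.
Qed.

Lemma cand_sum w p J M :
  lsum (lam_dk w) (cand p J M) =
  lsum w (seq 0 (S M)) ^ nfalse p * lsum (lam_dk w) (sorted_cands (ntrue p) J M).
Proof.
  unfold cand. rewrite lsum_flat_map, <- (Nat.sub_0_r (S M)), <- box_sum, <- lsum_scal_r.
  apply lsum_ext. intros u Hu. rewrite lsum_map, <- lsum_scal.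
  apply lsum_ext. intros s Hs. apply lam_dk_interleave;
    [apply (box_mem_length _ _ _ _ Hu) | apply (sorted_cands_length _ _ _ _ Hs)].
Qed.

Lemma admissible_weight_bound w p J S0 ks : (1 <= J)%nat -> w 0%nat = 1 ->
  (forall m, 0 <= w m <= 1) ->
  (forall M, lsum w (seq 0 M) <= S0) -> (forall M, lsum w (seq J M) <= 1/2) ->
  NoDup ks -> (forall k, In k ks -> nabP p k) ->
  lsum (lam_dk w) ks <= S0 ^ nfalse p * INR ((S (ntrue p)) ^ (J - 1)) * 2.
Proof.
  intros HJ H0 Hw HS HJs Hn Hk. set (M := list_max (concat ks)).
  assert (HM : forall k y, In k ks -> In y k -> (y <= M)%nat).
  { intros k y Hk' Hy. pose proof (proj1 (list_max_le (concat ks) M) (le_n _)) as HF.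
    rewrite Forall_forall in HF. apply HF, in_concat. eauto. }
  apply Rle_trans with (lsum (lam_dk w) (cand p J M)).
  { apply (NoDup_incl_lsum _ (list_eq_dec Nat.eq_dec)); auto.
    - intros; apply lam_dk_nonneg; apply Hw.
    - intros k Hk'. apply cover; auto. intros y Hy; eapply HM; eauto. }
  rewrite cand_sum, Rmult_assoc.
  apply Rmult_le_compat.
  - apply pow_le, lsum_nonneg. apply Hw.
  - apply lsum_nonneg. intros; apply lam_dk_nonneg; apply Hw.
  - apply pow_incr. split; [apply lsum_nonneg; apply Hw | apply HS].
  - apply sorted_cands_sum; auto.
Qed.

Lemma rpow_pos x t : 0 < x -> rpow x t = Rpower x t.
Proof. intros H. unfold rpow. destruct (Rle_dec x 0); [lra | auto]. Qed.

Lemma rpow_zero x t : x <= 0 -> rpow x t = 0.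
Proof. intros H. unfold rpow. destruct (Rle_dec x 0); [auto | lra]. Qed.

Lemma rpow_nonneg x t : 0 <= rpow x t.
Proof.
  destruct (Rle_dec x 0); [rewrite rpow_zero; lra|].
  rewrite rpow_pos by lra. left; apply exp_pos.
Qed.

Lemma rpow_one t : rpow 1 t = 1.
Proof. rewrite rpow_pos by lra. unfold Rpower. rewrite ln_1, Rmult_0_r, exp_0; auto. Qed.

Lemma rpow_mul x y t : 0 <= x -> 0 <= y -> rpow (x * y) t = rpow x t * rpow y t.
Proof.
  intros [Hx|<-] [Hy|<-]; try (rewrite ?Rmult_0_r, ?Rmult_0_l, (rpow_zero 0); lra).
  rewrite !rpow_pos by nra. rewrite Rpower_mult_distr; auto.
Qed.

Lemma rpow_le1 x t : 0 <= x <= 1 -> 0 <= t -> rpow x t <= 1.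
Proof.
  intros Hx Ht. destruct (Rle_dec x 0); [rewrite rpow_zero; lra|].
  rewrite rpow_pos by lra. rewrite <- (rpow_one t), rpow_pos by lra.
  destruct Ht as [Ht|<-]; [apply Rle_Rpower_l; lra | unfold Rpower; rewrite !Rmult_0_l; lra].
Qed.

Lemma rpow_plus_nat x t n : 0 <= x -> rpow x (t + INR n) = rpow x t * x ^ n.
Proof.
  intros [Hx|<-].
  - rewrite !rpow_pos by auto. rewrite Rpower_plus, Rpower_pow; auto.
  - rewrite !rpow_zero by lra. lra.
Qed.

Lemma rpow_div x y t : 0 <= x -> 0 < y -> rpow (x / y) t = rpow x t / Rpower y t.
Proof.
  intros Hx Hy. unfold Rdiv. rewrite rpow_mul; [|auto | left; apply Rinv_0_lt_compat; auto].
  rewrite (rpow_pos (/ y)) by (apply Rinv_0_lt_compat; auto).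
  unfold Rpower. rewrite ln_Rinv, <- exp_Ropp by auto. f_equal. f_equal. ring.
Qed.

Lemma lam_dk_rpow g t k : (forall m, 0 <= g m) ->
  lam_dk (fun m => rpow (g m) t) k = rpow (lam_dk g k) t.
Proof.
  intros H. induction k as [|a k IH]; [apply eq_sym, rpow_one|].
  change (rpow (g a) t * lam_dk (fun m => rpow (g m) t) k = rpow (g a * lam_dk g k) t).
  rewrite rpow_mul, IH; auto. apply lam_dk_nonneg; auto.
Qed.

Lemma weights_with_small_tail (v : nat -> R) t0 th J S0 :
  (forall m, 0 <= v m <= 1) -> (forall m, (J <= m)%nat -> v m <= th) ->
  0 <= th < 1 -> 0 < t0 ->
  (forall M, lsum (fun m => rpow (v m) t0) (seq 0 M) <= S0) ->
  exists tau, 0 < tau /\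
    (forall M, lsum (fun m => rpow (v m) tau) (seq 0 M) <= S0) /\
    (forall M, lsum (fun m => rpow (v m) tau) (seq J M) <= 1/2).
Proof.
  intros Hv HvJ Hth Ht0 HS.
  assert (Hf : forall m, 0 <= rpow (v m) t0) by (intros; apply rpow_nonneg).
  destruct (pow_lt_1_zero th ltac:(rewrite Rabs_right; lra) (1 / (2 * (Rabs S0 + 1))))
    as [n Hn]; [apply Rdiv_lt_0_compat; pose proof (Rabs_pos S0); lra|].
  specialize (Hn n (le_n n)). rewrite Rabs_right in Hn by (apply Rle_ge, pow_le; lra).
  assert (Hsmall : th ^ n * S0 <= 1/2).
  { pose proof (Rle_abs S0). pose proof (Rabs_pos S0). pose proof (pow_le th n (proj1 Hth)).
    assert (th ^ n * (Rabs S0 + 1) < 1/2).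
    { apply (Rmult_lt_compat_r (Rabs S0 + 1)) in Hn; [|lra].
      replace (1 / (2 * (Rabs S0 + 1)) * (Rabs S0 + 1)) with (1/2) in Hn by (field; lra). lra. }
    nra. }
  exists (t0 + INR n). split; [pose proof (pos_INR n); lra|].
  assert (Hw : forall m, rpow (v m) (t0 + INR n) = rpow (v m) t0 * v m ^ n)
    by (intros; apply rpow_plus_nat, Hv).
  split.
  - intros M. eapply Rle_trans; [|apply (HS M)]. apply lsum_le. intros m _. rewrite Hw.
    pose proof (pow_incr (v m) 1 n (Hv m)) as Hle1. rewrite pow1 in Hle1. pose proof (Hf m).
    pose proof (pow_le (v m) n (proj1 (Hv m))). nra.
  - intros M. apply Rle_trans with (lsum (fun m => rpow (v m) t0) (seq J M) * th ^ n).
    + rewrite <- lsum_scal_r. apply lsum_le. intros m Hm. apply in_seq in Hm. rewrite Hw.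
      apply Rmult_le_compat_l; [apply Hf|]. apply pow_incr. split; [apply Hv | apply HvJ; lia].
    + assert (Htail : lsum (fun m => rpow (v m) t0) (seq J M) <= S0).
      { eapply Rle_trans; [|apply (HS (J + M)%nat)]. rewrite seq_app, lsum_app.
        pose proof (lsum_nonneg _ (seq 0 J) Hf). simpl. lra. }
      pose proof (pow_le th n (proj1 Hth)). nra.
Qed.

Lemma ln_le x y : 0 < x -> x <= y -> ln x <= ln y.
Proof. intros H [H'|<-]; [left; apply ln_increasing; auto | lra]. Qed.

Lemma exp_le x y : x <= y -> exp x <= exp y.
Proof. intros [H|<-]; [left; apply exp_increasing; auto | lra]. Qed.

Lemma ratio_bounds x y : 0 <= x <= y -> 0 < y -> 0 <= x / y <= 1.
Proof.
  intros Hx Hy. assert (E : x / y * y = x) by (field; lra).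
  assert (0 <= x / y) by (apply Rmult_le_pos; [lra | left; apply Rinv_0_lt_compat; auto]).
  split; nra.
Qed.

Lemma ratio_lt_1 x y : 0 <= x < y -> x / y < 1.
Proof.
  intros Hx. assert (E : x / y * y = x) by (field; lra).
  assert (0 <= x / y) by (apply Rmult_le_pos; [lra | left; apply Rinv_0_lt_compat; lra]). nra.
Qed.

Lemma Rpower_half x : 0 < x <= 1 ->
  0 < Rpower x (1/2) <= 1 /\ Rpower x (1/2) ^ 2 = x.
Proof.
  intros Hx. split.
  - split; [apply exp_pos|]. rewrite <- (rpow_pos x) by lra. apply rpow_le1; lra.
  - rewrite <- Rpower_pow by apply exp_pos. rewrite Rpower_mult.
    replace (1 / 2 * INR 2) with 1 by (simpl; field). apply Rpower_1; lra.
Qed.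

Lemma summable_of_inverse_square (f : nat -> R) A :
  (forall m, 0 <= f m) -> (forall m, f m <= A / (INR m + 1) ^ 2) ->
  exists l, infinite_sum f l.
Proof.
  intros Hf HA.
  assert (Hinv : forall n, sum_f_R0 (fun m => / (INR m + 1) ^ 2) n <= 2 - / (INR n + 1)).
  { induction n as [|n IH]; [simpl; replace (/ ((0 + 1) * 1)) with 1 by field;
                             replace (/ (0 + 1)) with 1 by field; lra|].
    rewrite tech5, S_INR. set (t := INR n). assert (0 <= t) by apply pos_INR.
    fold t in IH.
    assert (E : / (t + 1) - / (t + 1 + 1) - / (t + 1 + 1) ^ 2 = / ((t + 1) * (t + 1 + 1) ^ 2))
      by (field; lra).
    assert (0 < / ((t + 1) * (t + 1 + 1) ^ 2))
      by (apply Rinv_0_lt_compat, Rmult_lt_0_compat; [|apply pow_lt]; lra).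
    lra. }
  set (u := sum_f_R0 f).
  assert (Hg : Un_growing u) by (intros n; unfold u; simpl; pose proof (Hf (S n)); lra).
  assert (Hb : has_ub u).
  { exists (Rabs A * 2). intros z [n ->]. unfold u.
    apply Rle_trans with (sum_f_R0 (fun m => / (INR m + 1) ^ 2 * Rabs A) n).
    - apply sum_Rle. intros m _. eapply Rle_trans; [apply HA|]. unfold Rdiv.
      rewrite Rmult_comm. apply Rmult_le_compat_l; [left; apply Rinv_0_lt_compat, pow_lt; pose proof (pos_INR m); lra|].
      apply Rle_abs.
    - rewrite <- scal_sum. pose proof (Hinv n). pose proof (Rabs_pos A).
      assert (0 < / (INR n + 1)) by (apply Rinv_0_lt_compat; pose proof (pos_INR n); lra).
      apply Rmult_le_compat_l; lra. }
  destruct (growing_cv u Hg Hb) as [l Hl]. exists l. exact Hl.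
Qed.

Lemma ln_INR_nonneg d : (1 <= d)%nat -> 0 <= ln (INR d).
Proof. intros H. rewrite <- ln_1. apply ln_le; [lra | apply (le_INR 1); auto]. Qed.

Lemma log_bound_poly s C q c d : 0 < s -> 0 < C -> 0 <= q -> (1 <= d)%nat ->
  s * (1 + Rabs (ln (C * Rpower (INR d) q) + c) / ln 2) <=
  (s * (1 + Rabs (ln C + c) / ln 2) + s * q / ln 2) * (1 + ln (INR d)).
Proof.
  intros Hs HC Hq Hd. pose proof (ln_INR_nonneg d Hd) as HL.
  assert (Hln2 : 0 < ln 2) by (rewrite <- ln_1; apply ln_increasing; lra).
  rewrite ln_mult, ln_Rpower by (try apply exp_pos; auto).
  set (L := ln (INR d)) in *. set (A := Rabs (ln C + c)).
  assert (Habs : Rabs (ln C + q * L + c) <= A + q * L).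
  { replace (ln C + q * L + c) with ((ln C + c) + q * L) by ring.
    eapply Rle_trans; [apply Rabs_triang|]. rewrite (Rabs_right (q * L)); [unfold A; lra|].
    apply Rle_ge, Rmult_le_pos; lra. }
  assert (HA : 0 <= A) by apply Rabs_pos.
  assert (Hi : 0 < / ln 2) by (apply Rinv_0_lt_compat; lra).
  unfold Rdiv. apply Rle_trans with (s * (1 + A * / ln 2) + s * q * / ln 2 * L).
  - assert (Rabs (ln C + q * L + c) * / ln 2 <= (A + q * L) * / ln 2)
      by (apply Rmult_le_compat_r; lra). nra.
  - assert (0 <= s * (1 + A * / ln 2)) by (apply Rmult_le_pos; [lra|]; nra).
    assert (0 <= s * q * / ln 2) by (apply Rmult_le_pos; [apply Rmult_le_pos|]; lra).
    nra.
Qed.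

Lemma pow_le_poly S0 C b d : 1 <= S0 -> 0 <= C -> (1 <= d)%nat ->
  INR b <= C * (1 + ln (INR d)) ->
  S0 ^ b <= Rpower S0 C * Rpower (INR d) (C * ln S0).
Proof.
  intros HS HC Hd Hb. pose proof (ln_INR_nonneg d Hd).
  assert (HlS : 0 <= ln S0) by (rewrite <- ln_1; apply ln_le; lra).
  rewrite <- Rpower_pow by lra. unfold Rpower. rewrite <- exp_plus. apply exp_le. nra.
Qed.

Lemma succ_pow_le_poly a d J : (a <= d)%nat -> (1 <= d)%nat ->
  INR (S a ^ J) <= 2 ^ J * Rpower (INR d) (INR J).
Proof.
  intros Ha Hd. rewrite Rpower_pow by (apply (lt_INR 0); lia).
  rewrite <- Rpow_mult_distr, pow_INR. apply pow_incr. split; [apply pos_INR|].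
  apply le_INR in Ha. apply le_INR in Hd. rewrite S_INR. simpl in Hd. lra.
Qed.

Section Eigenvalues.

Variables (lam : nat -> R) (I : nat -> nat -> bool).
Hypothesis lam_nonneg : forall m, 0 <= lam m.
Hypothesis lam_decr : forall m, lam (S m) <= lam m.
Hypothesis lam0_pos : 0 < lam 0%nat.

Lemma lam_mono n m : (n <= m)%nat -> lam m <= lam n.
Proof. induction 1; [lra|]. pose proof (lam_decr m); lra. Qed.

Lemma mu_bounds m : 0 <= mu lam m <= 1.
Proof.
  unfold mu. pose proof (lam_nonneg m). pose proof (lam_mono 0 m (Nat.le_0_l _)).
  apply ratio_bounds; lra.
Qed.

Lemma mu_0 : mu lam 0 = 1.
Proof. unfold mu; field; lra. Qed.

(** *** Sufficiency: the weighted counting bound *)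

(** Markov step: an index above the threshold has weight
    [prod (mu^tau) >= e^(2 tau)]. *)
Lemma weight_above_threshold tau d e k : 0 < tau -> 0 < e ->
  length k = d -> lam_dk lam k > (e * eps_init lam d) ^ 2 ->
  Rpower e (2 * tau) <= lam_dk (fun m => rpow (mu lam m) tau) k.
Proof.
  intros Ht He Hlen Hgt. apply above_threshold_iff in Hgt; auto.
  rewrite lam_dk_rpow by (intros; apply mu_bounds).
  rewrite rpow_pos by (pose proof (pow_lt e 2 He); lra).
  replace (2 * tau) with (INR 2 * tau) by (simpl; ring).
  rewrite <- Rpower_mult, Rpower_pow by auto.
  left. apply Rlt_Rpower_l; auto. split; [apply pow_lt|]; lra.
Qed.

Lemma mu_summable tau0 : in_ell lam tau0 ->
  exists S0, forall M, lsum (fun m => rpow (mu lam m) tau0) (seq 0 M) <= S0.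
Proof.
  intros [l Hl]. exists (l / Rpower (lam 0%nat) tau0). intros M.
  unfold mu. rewrite (lsum_ext _ (fun m => rpow (lam m) tau0 * / Rpower (lam 0%nat) tau0))
    by (intros; apply rpow_div; auto).
  rewrite lsum_scal_r. apply Rmult_le_compat_r; [left; apply Rinv_0_lt_compat, exp_pos|].
  apply lsum_seq0_le; auto. intros; apply rpow_nonneg.
Qed.

Lemma info_upper_bound tau0 J : 0 < tau0 -> in_ell lam tau0 ->
  (1 <= J)%nat -> lam J < lam 0%nat ->
  exists tau S0, 0 < tau /\ 1 <= S0 /\ forall d e, 0 < e <= 1 ->
    info_le lam I (e * eps_init lam d) d
      (S0 ^ b_of I d * INR (S (card_I I d) ^ (J - 1)) * 2 * Rpower e (- (2 * tau))).
Proof.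
  intros Ht0 Hell HJ HJlt. destruct (mu_summable tau0 Hell) as [S0 HS0].
  destruct (weights_with_small_tail (mu lam) tau0 (mu lam J) J S0 mu_bounds)
    as [tau [Htau [HwS HwJ]]]; auto.
  { intros m Hm. unfold mu. apply Rmult_le_compat_r; [left; apply Rinv_0_lt_compat; auto|].
    apply lam_mono; auto. }
  { split; [apply mu_bounds|]. unfold mu. apply ratio_lt_1. pose proof (lam_nonneg J); lra. }
  set (w := fun m => rpow (mu lam m) tau) in *.
  assert (Hw0 : w 0%nat = 1) by (unfold w; rewrite mu_0; apply rpow_one).
  assert (Hw : forall m, 0 <= w m <= 1)
    by (intros; split; [apply rpow_nonneg | apply rpow_le1; [apply mu_bounds | lra]]).
  assert (HS1 : 1 <= S0) by (specialize (HwS 1%nat); simpl in HwS; lra).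
  exists tau, S0. split; [auto|]. split; [auto|].
  intros d e He ks Hn Hks.
  assert (Hnab : forall k, In k ks -> nabP (pat I d) k)
    by (intros k Hk; apply nabla_sym_pat, Hks; auto).
  pose proof (admissible_weight_bound w (pat I d) J S0 ks HJ Hw0 Hw HwS HwJ Hn Hnab) as Hup.
  rewrite nfalse_pat, ntrue_pat in Hup.
  assert (Hlow : INR (length ks) * Rpower e (2 * tau) <= lsum (lam_dk w) ks).
  { rewrite <- lsum_const. apply lsum_le. intros k Hk. destruct (Hks k Hk) as [Hk1 Hk2].
    apply (weight_above_threshold tau d); [lra | lra | apply Hk1 | exact Hk2]. }
  rewrite Rpower_Ropp. pose proof (exp_pos (2 * tau * ln e)) as Hpos.
  fold (Rpower e (2 * tau)) in Hpos.
  apply (Rmult_le_reg_r (Rpower e (2 * tau))); auto.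
  rewrite Rmult_assoc, Rinv_l by lra. lra.
Qed.

(** *** Necessity *)

(** For [d = 1] every singleton [[i]] is admissible, so if [e^2 < mu m] the
    [m + 1] singletons [[0]], ..., [[m]] lie above the threshold. *)
Lemma univariate_count N e m : 0 < e -> e ^ 2 < mu lam m ->
  info_le lam I (e * eps_init lam 1) 1 N -> INR (S m) <= N.
Proof.
  intros He Hem Hinfo. set (ks := map (fun i => [i]) (seq 0 (S m))).
  replace (S m) with (length ks) by (unfold ks; rewrite length_map, length_seq; auto).
  apply (info_le_family lam I e 1 _ ks); auto.
  - apply NoDup_map_inj; [apply seq_NoDup|]. intros a b _ _ E; injection E; auto.
  - intros k Hk. unfold ks in Hk. apply in_map_iff in Hk. destruct Hk as [i [<- Hi]].
    apply in_seq in Hi. split; [split; [auto | simpl; intros; lia]|].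
    change (lam_dk (mu lam) [i]) with (mu lam i * 1). rewrite Rmult_1_r.
    unfold mu in *. pose proof (lam_mono i m ltac:(lia)).
    apply Rlt_le_trans with (lam m / lam 0%nat); auto.
    apply Rmult_le_compat_r; [left; apply Rinv_0_lt_compat|]; auto.
Qed.

(** From [d = 1]: with [e^2 = mu m / 2], [n(e,1) <= C e^-p] gives
    [(m + 1) (mu m / 2)^(p/2) <= C], i.e. [lam m ^ p = O(1/(m+1)^2)]. *)
Lemma ell_of_univariate_bound C p : 0 < p ->
  (forall e, 0 < e <= 1 -> info_le lam I (e * eps_init lam 1) 1 (C * Rpower e (- p))) ->
  in_ell lam p.
Proof.
  intros Hp Hinfo.
  apply (summable_of_inverse_square _ (Rpower (2 * lam 0%nat) p * C ^ 2));
    [intros; apply rpow_nonneg|]. intros m.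
  assert (Hm1 : 0 < INR m + 1) by (pose proof (pos_INR m); lra).
  destruct (Rle_dec (lam m) 0) as [Hz|Hz].
  { rewrite rpow_zero by auto. apply Rmult_le_pos; [|left; apply Rinv_0_lt_compat, pow_lt; lra].
    apply Rmult_le_pos; [left; apply exp_pos | apply pow2_ge_0]. }
  apply Rnot_le_lt in Hz. rewrite rpow_pos by auto.
  set (x := mu lam m / 2).
  assert (Hx : 0 < x <= 1) by (pose proof (mu_bounds m); unfold x, mu in *;
                               split; [apply Rdiv_lt_0_compat; [apply Rdiv_lt_0_compat|]|]; lra).
  destruct (Rpower_half x Hx) as [He He2].
  assert (Hcount : INR (S m) <= C * Rpower (Rpower x (1/2)) (- p)).
  { apply (univariate_count _ (Rpower x (1/2))); [lra | | apply Hinfo; auto].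
    rewrite He2. unfold x. assert (0 < mu lam m) by (apply Rdiv_lt_0_compat; auto). lra. }
  set (y := Rpower x (p / 2)).
  assert (Hy : 0 < y) by apply exp_pos.
  assert (Hey : Rpower (Rpower x (1/2)) (- p) = / y).
  { unfold y. rewrite Rpower_Ropp, Rpower_mult. f_equal. f_equal. field. }
  rewrite Hey, S_INR in Hcount.
  assert (Hyc : y * (INR m + 1) <= C).
  { apply (Rmult_le_compat_l y) in Hcount; [|lra].
    rewrite (Rmult_comm C), <- Rmult_assoc, Rinv_r, Rmult_1_l in Hcount by lra. lra. }
  replace (lam m) with (2 * lam 0%nat * x) by (unfold x, mu; field; lra).
  rewrite <- Rpower_mult_distr by lra.
  replace (Rpower x p) with (y ^ 2)
    by (unfold y; rewrite <- Rpower_pow, Rpower_mult by apply exp_pos; f_equal; simpl; field).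
  assert (Hsq : (y * (INR m + 1)) ^ 2 <= C ^ 2) by (apply pow_incr; nra).
  pose proof (exp_pos (p * ln (2 * lam 0%nat))) as HP. fold (Rpower (2 * lam 0%nat) p) in HP.
  replace (y ^ 2) with ((y * (INR m + 1)) ^ 2 / (INR m + 1) ^ 2) by (field; lra).
  unfold Rdiv. rewrite <- Rmult_assoc.
  apply Rmult_le_compat_r; [left; apply Rinv_0_lt_compat, pow_lt; lra|].
  apply Rmult_le_compat_l; lra.
Qed.

(** If [lam 0 = lam 1], the [d+1] indices [0^t 1^(d-t)] all have normalized
    weight 1, so [n(1/2, d) >= d + 1]: no bound independent of [d]. *)
Lemma no_uniform_bound_if_equal C p : lam 1%nat = lam 0%nat ->
  ~ (forall d e, (1 <= d)%nat -> 0 < e <= 1 ->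
       info_le lam I (e * eps_init lam d) d (C * Rpower e (- p))).
Proof.
  intros Heq H. destruct (INR_unbounded (C * Rpower (1/2) (- p))) as [d Hd].
  assert (Hmu1 : mu lam 1 = 1) by (unfold mu; rewrite Heq; field; lra).
  destruct (step_family_props (mu lam) (pat I (S d)) mu_0 Hmu1) as [F1 [F2 F3]].
  rewrite pat_length in F1, F2, F3.
  assert (Hc : INR (length (step_family (S d))) <= C * Rpower (1/2) (- p)).
  { apply (info_le_family lam I (1/2) (S d)); auto; [apply H; [lia | lra]|].
    intros k Hk. destruct (F3 k Hk) as [Hnab ->]. split; [auto | lra]. }
  rewrite F2, !S_INR in Hc. lra.
Qed.

Lemma block_count d K p s j : 0 < lam 1%nat -> (j * s <= b_of I d)%nat ->
  (forall e, 0 < e <= 1 -> info_le lam I (e * eps_init lam d) d (K * Rpower e (- p))) ->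
  INR s ^ j <= K * Rpower (mu lam 1 ^ j / 2) (- (p / 2)).
Proof.
  intros H1 Hjs Hinfo. set (m1 := mu lam 1%nat).
  assert (Hm1 : 0 < m1 <= 1) by (split; [apply Rdiv_lt_0_compat | apply mu_bounds]; auto).
  destruct (block_family_props (mu lam) (pat I d) s j mu_0 ltac:(rewrite nfalse_pat; auto))
    as [F1 [F2 F3]].
  set (x := m1 ^ j / 2).
  assert (Hx : 0 < x <= 1)
    by (unfold x; pose proof (pow_lt m1 j (proj1 Hm1)); pose proof (pow_incr m1 1 j ltac:(lra));
        rewrite pow1 in *; split; lra).
  destruct (Rpower_half x Hx) as [He He2].
  rewrite <- pow_INR, <- F2.
  replace (Rpower x (- (p / 2))) with (Rpower (Rpower x (1/2)) (- p))
    by (rewrite Rpower_mult; f_equal; field).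
  apply (info_le_family lam I (Rpower x (1/2)) d); auto.
  intros k Hk. destruct (F3 k Hk) as [Hnab Hpr]. split; [auto|].
  rewrite Hpr, He2. fold m1. unfold x. pose proof (pow_lt m1 j (proj1 Hm1)). lra.
Qed.

(** If [n(e,d) <= K e^-p] for all [e], then [b_d] is [O(1 + |ln K|)]: for a
    fixed block size [s] with [s >= 2 mu_1^(-p/2)], taking logarithms in
    [block_count] with [j = b_d / s] gives [2^j <= K 2^(p/2)]. *)
Lemma free_positions_bound p : 0 < p -> 0 < lam 1%nat ->
  exists s : R, 0 < s /\ forall d K, (1 <= d)%nat -> 0 < K ->
   (forall e, 0 < e <= 1 -> info_le lam I (e * eps_init lam d) d (K * Rpower e (- p))) ->
   INR (b_of I d) <= s * (1 + Rabs (ln K + p / 2 * ln 2) / ln 2).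
Proof.
  intros Hp H1. set (m1 := mu lam 1%nat).
  assert (Hm1 : 0 < m1 <= 1) by (split; [apply Rdiv_lt_0_compat | apply mu_bounds]; auto).
  assert (Hln2 : 0 < ln 2) by (rewrite <- ln_1; apply ln_increasing; lra).
  assert (Hlm1 : ln m1 <= 0) by (rewrite <- ln_1; apply ln_le; lra).
  destruct (INR_unbounded (exp (ln 2 - p / 2 * ln m1))) as [sn Hsn].
  pose proof (exp_pos (ln 2 - p / 2 * ln m1)) as Hexp.
  assert (Hsn2 : ln 2 - p / 2 * ln m1 <= ln (INR sn))
    by (rewrite <- (ln_exp (ln 2 - p / 2 * ln m1)); apply ln_le; lra).
  assert (Hsn1 : (1 <= sn)%nat) by (destruct sn; simpl in Hsn; [lra | lia]).
  exists (INR sn). split; [lra|]. intros d K Hd HK Hinfo.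
  set (b := b_of I d). set (j := (b / sn)%nat).
  assert (Hjs : (j * sn <= b)%nat) by (unfold j; rewrite Nat.mul_comm; apply Nat.Div0.mul_div_le).
  assert (Hbj : (b < sn * S j)%nat).
  { unfold j. pose proof (Nat.div_mod b sn ltac:(lia)).
    pose proof (Nat.mod_upper_bound b sn ltac:(lia)). lia. }
  pose proof (block_count d K p sn j H1 Hjs Hinfo) as Hc. fold m1 in Hc.
  (* in logarithms: j ln sn <= ln K - (p/2) (j ln m1 - ln 2) *)
  apply ln_le in Hc; [|apply pow_lt; lra].
  rewrite ln_pow, ln_mult, ln_Rpower in Hc by (try apply exp_pos; lra).
  unfold Rdiv in Hc. rewrite ln_mult, ln_pow, ln_Rinv in Hc by (try apply pow_lt; lra).
  assert (Hj : INR j * ln 2 <= ln K + p / 2 * ln 2).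
  { pose proof (pos_INR j).
    assert (INR j * (ln 2 - p / 2 * ln m1) <= INR j * ln (INR sn)) by (apply Rmult_le_compat_l; auto).
    unfold Rdiv in *. nra. }
  assert (Hj' : INR j <= Rabs (ln K + p / 2 * ln 2) / ln 2).
  { apply (Rmult_le_reg_r (ln 2)); auto. unfold Rdiv. rewrite Rmult_assoc, Rinv_l by lra.
    pose proof (Rle_abs (ln K + p / 2 * ln 2)). lra. }
  apply lt_INR in Hbj. rewrite mult_INR, S_INR in Hbj. fold b. nra.
Qed.

Lemma spt_necessary : 0 < lam 1%nat -> strongly_poly_tractable lam I ->
  (exists tau, tau > 0 /\ in_ell lam tau) /\ lam 0%nat > lam 1%nat /\
  exists C : R, forall d, (1 <= d)%nat -> INR (b_of I d) <= C.
Proof.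
  intros H1 [C [p [HC [Hp Hspt]]]]. split; [|split].
  - exists p. split; auto. apply (ell_of_univariate_bound C); auto.
  - destruct (Rtotal_order (lam 0%nat) (lam 1%nat)) as [Hl|[Hl|Hl]]; auto.
    + pose proof (lam_decr 0%nat); lra.
    + exfalso. apply (no_uniform_bound_if_equal C p); auto.
  - destruct (free_positions_bound p Hp H1) as [s [Hs Hb]].
    exists (s * (1 + Rabs (ln C + p / 2 * ln 2) / ln 2)). intros d Hd. apply Hb; auto.
Qed.

(** Conversely, with [J = 1] the upper bound is [S0^(b_d) * 2 * e^(-2 tau)]. *)
Lemma spt_sufficient :
  (exists tau, tau > 0 /\ in_ell lam tau) -> lam 0%nat > lam 1%nat ->
  (exists C : R, forall d, (1 <= d)%nat -> INR (b_of I d) <= C) ->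
  strongly_poly_tractable lam I.
Proof.
  intros [tau [Ht Hell]] Hgt [Cb HCb].
  destruct (info_upper_bound tau 1 Ht Hell (le_n 1) Hgt) as [tau' [S0 [Ht' [HS0 Hub]]]].
  destruct (INR_unbounded Cb) as [N HN].
  exists (S0 ^ N * 2), (2 * tau'). split; [apply Rmult_lt_0_compat; [apply pow_lt|]; lra|].
  split; [lra|]. intros d e Hd He. eapply info_le_mono; [apply Hub; auto|].
  rewrite Nat.sub_diag, Nat.pow_0_r. simpl INR. rewrite Rmult_1_r.
  assert (HbN : (b_of I d <= N)%nat) by (apply INR_le; specialize (HCb d Hd); lra).
  pose proof (exp_pos (- (2 * tau') * ln e)).
  apply Rmult_le_compat_r; [left; auto|]. apply Rmult_le_compat_r; [lra|].
  apply Rle_pow; auto.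
Qed.

(** Tractability forces summability and [b_d = O(1 + ln d)] (apply the
    block bound with [K = C d^q]). *)
Lemma pt_necessary : 0 < lam 1%nat -> poly_tractable lam I ->
  (exists tau, tau > 0 /\ in_ell lam tau) /\
  exists C : R, forall d, (1 <= d)%nat -> INR (b_of I d) <= C * (1 + ln (INR d)).
Proof.
  intros H1 [C [p [q [HC [Hp [Hq Hpt]]]]]]. split.
  - exists p. split; auto. apply (ell_of_univariate_bound C); auto.
    intros e He. eapply info_le_mono; [apply (Hpt 1%nat e (le_n 1) He)|].
    simpl INR. unfold Rpower at 2. rewrite ln_1, Rmult_0_r, exp_0. lra.
  - destruct (free_positions_bound p Hp H1) as [s [Hs Hb]].
    exists (s * (1 + Rabs (ln C + p / 2 * ln 2) / ln 2) + s * q / ln 2). intros d Hd.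
    eapply Rle_trans; [apply (Hb d (C * Rpower (INR d) q) Hd) | apply log_bound_poly; auto; lra].
    + apply Rmult_lt_0_compat; [lra | apply exp_pos].
    + intros e He. eapply info_le_mono; [apply Hpt; auto | right; ring].
Qed.

(** Conversely, [S0^(b_d)] and [(#I_d + 1)^(J-1)] are polynomial in [d]. *)
Lemma pt_sufficient : Un_cv lam 0 ->
  (exists tau, tau > 0 /\ in_ell lam tau) ->
  (exists C : R, forall d, (1 <= d)%nat -> INR (b_of I d) <= C * (1 + ln (INR d))) ->
  poly_tractable lam I.
Proof.
  intros Hlim [tau [Ht Hell]] [Cb HCb].
  (* some eigenvalue [lam J] lies strictly below [lam 0] *)
  destruct (Hlim (lam 0%nat) lam0_pos) as [N HN].
  assert (HJ : lam (S N) < lam 0%nat).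
  { specialize (HN (S N) ltac:(lia)). unfold Rdist in HN. rewrite Rminus_0_r in HN.
    pose proof (Rle_abs (lam (S N))). lra. }
  destruct (info_upper_bound tau (S N) Ht Hell ltac:(lia) HJ) as [tau' [S0 [Ht' [HS0 Hub]]]].
  set (C := Rmax Cb 0). set (J1 := (S N - 1)%nat).
  assert (HC : 0 <= C) by apply Rmax_r.
  assert (HlS0 : 0 <= ln S0) by (rewrite <- ln_1; apply ln_le; lra).
  exists (Rpower S0 C * 2 ^ J1 * 2), (2 * tau'), (C * ln S0 + INR J1).
  split; [apply Rmult_lt_0_compat; [apply Rmult_lt_0_compat; [apply exp_pos | apply pow_lt]|]; lra|].
  split; [lra|]. split; [pose proof (pos_INR J1); apply Rle_ge, Rplus_le_le_0_compat; [apply Rmult_le_pos|]; lra|].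
  intros d e Hd He. eapply info_le_mono; [apply Hub; auto|]. fold J1.
  assert (Hb : S0 ^ b_of I d <= Rpower S0 C * Rpower (INR d) (C * ln S0)).
  { apply pow_le_poly; auto. eapply Rle_trans; [apply HCb; auto|].
    apply Rmult_le_compat_r; [pose proof (ln_INR_nonneg d Hd); lra | apply Rmax_l]. }
  assert (Hcard : INR (S (card_I I d) ^ J1) <= 2 ^ J1 * Rpower (INR d) (INR J1)).
  { apply succ_pow_le_poly; auto. apply card_I_le. }
  pose proof (exp_pos (- (2 * tau') * ln e)) as HE. fold (Rpower e (- (2 * tau'))) in HE.
  rewrite Rpower_plus.
  replace (Rpower S0 C * 2 ^ J1 * 2 * Rpower e (- (2 * tau')) *
           (Rpower (INR d) (C * ln S0) * Rpower (INR d) (INR J1)))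
    with ((Rpower S0 C * Rpower (INR d) (C * ln S0)) * (2 ^ J1 * Rpower (INR d) (INR J1)) * 2 *
          Rpower e (- (2 * tau'))) by ring.
  apply Rmult_le_compat_r; [lra|]. apply Rmult_le_compat_r; [lra|].
  apply Rmult_le_compat; [apply pow_le; lra | apply pos_INR | auto | auto].
Qed.

End Eigenvalues.

Theorem theorem3 (lam : nat -> R) (I : nat -> nat -> bool)
  (* eigenvalues of S_1^dagger S_1 for compact S_1 on infinite-dim. H_1 *)
  (Hnonneg : forall m, 0 <= lam m)
  (Hdecr : forall m, lam (S m) <= lam m)
  (Hlim : Un_cv lam 0)
  (* standing assumptions: lambda_2 > 0, eps_init > 0 *)
  (Hlam2 : lam 1%nat > 0)
  (Hinit : forall d, (1 <= d)%nat -> eps_init lam d > 0)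
  (* I_d nonempty subset of {1..d}, I_1 = {1} *)
  (HIsub : forall d i, I d i = true -> (1 <= i <= d)%nat)
  (HIne : forall d, (1 <= d)%nat -> exists i, I d i = true)
  (HI1 : I 1%nat 1%nat = true) :
  (strongly_poly_tractable lam I <->
     ((exists tau, tau > 0 /\ in_ell lam tau) /\ lam 0%nat > lam 1%nat /\
      exists C : R, forall d, (1 <= d)%nat -> INR (b_of I d) <= C))
  /\
  (poly_tractable lam I <->
     ((exists tau, tau > 0 /\ in_ell lam tau) /\
      exists C : R, forall d, (1 <= d)%nat ->
        INR (b_of I d) <= C * (1 + ln (INR d)))).
Proof.
  assert (H0 : 0 < lam 0%nat) by (pose proof (Hdecr 0%nat); lra).
  split; split.
  - apply spt_necessary; auto.
  - intros [Hell [Hgt Hb]]. apply spt_sufficient; auto.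
  - apply pt_necessary; auto.
  - intros [Hell Hb]. apply pt_sufficient; auto.
Qed.
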